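(* Fix an integer $j\ge 0$. Define a function $\mathrm{suc}$ on triples of integers with $z\ge1$ recursively by \[\mathrm{suc}(x,y,1)=\{(2,y{+}1,1),(3,y{+}1,1),\ldots,(x{+}1,y{+}1,1)\}\cup\{(x,x{+}1,1),(x,x{+}2,1),\ldots,(x,y,1)\}\] (the second set being empty if $y\le x$), and for $z\geq 2$, \[\mathrm{suc}(x,y,z)=\{(2,y{+}1,z),(3,y{+}1,z),\ldots,(x{+}1,y{+}1,z)\}\cup \mathrm{suc}(x,y,z{-}1).\] Let $T$ be the rooted labeled tree whose root has label $(j{+}1,j{+}1,j{+}1)$ and in which a vertex with label $L$ has exactly one child with label $L'$ for each $L'\in \mathrm{suc}(L)$. Then $T$ is isomorphic as a rooted tree to $BT^j(1234)$.
   Context: $B_n$ is the group of permutations $w$ of $\{-n,\ldots,-1,1,\ldots,n\}$ with $w(-i)=-w(i)$; such $w$ is determined by $[w(-n),w(-n+1),\ldots,w(-1)]$. $w$ avoids $1234$ if there are no indices $-n\le a<b<c<d\le n$ (nonzero) with $w(a)<w(b)<w(c)<w(d)$. $B_n^j(1234)$ is the set of $1234$-avoiding $w\in B_n$ with $w(i)>0$ for exactly $j$ indices $i\in\{1,\ldots,n\}$. For $\ell\ge1$ let $\beta_\ell(x)=x$ if $|x|<\ell$, $\beta_\ell(x)=x-1$ if $x<-\ell$, $\beta_\ell(x)=x+1$ if $x>\ell$. For $w\in B_n$, $1\le i\le n+1$ and $1\le \ell\le n+1$, let $w^{-i}_\ell\in B_{n+1}$ be defined by $w^{-i}_\ell(-k)=\beta_\ell(w(-k+1))$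 for $i+1\le k\le n+1$, $w^{-i}_\ell(-i)=\ell$, $w^{-i}_\ell(-k)=\beta_\ell(w(-k))$ for $1\le k\le i-1$, extended by $w^{-i}_\ell(k)=-w^{-i}_\ell(-k)$. The tree $BT^j(1234)$ is the rooted tree whose vertices are signed permutations, with root the element $[-1,-2,\ldots,-j]$ of $B_j$ (i.e. $w(-k)=-(j+1-k)$ for $1\le k\le j$), and in which the children of a vertex $w\in B_n^j(1234)$ are all $w^{-i}_\ell$ with $1\le i\le n+1$ and $m<\ell\le n+1$ that avoid $1234$, where $m=\max(\{w(-k):1\le k\le n\}\cup\{0\})$. *)

From mathcomp Require Import all_boot all_order all_algebra.
Set Implicit Arguments. Unset Strict Implicit. Unset Printing Implicit Defensive.
Import Order.TTheory GRing.Theory Num.Theory.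
Local Open Scope ring_scope.

(* The rooted tree generated by root r and children ch : a vertex is the
   (unique) path [:: r; a1; ...; ak] from the root, with a_{i+1} \in ch a_i.
   Children are taken as a set (membership), so each label in ch a gives
   exactly one child. *)
Definition is_node (A : eqType) (r : A) (ch : A -> seq A) (p : seq A) : bool :=
  if p is a :: s then (a == r) && path (fun x y => y \in ch x) a s else false.

Definition is_child (A : Type) (p q : seq A) : Prop := exists a, q = rcons p a.

Definition tree_iso (A B : eqType) (rA : A) (chA : A -> seq A)
    (rB : B) (chB : B -> seq B) : Prop :=
  exists (f : seq A -> seq B) (g : seq B -> seq A),
    [/\ forall p, is_node rA chA p -> is_node rB chB (f p) /\ g (f p) = p,
        forall q, is_node rB chB q -> is_node rA chA (g q) /\ f (g q) = q,
        f [:: rA] = [:: rB] &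
        forall p q, is_node rA chA p -> is_node rA chA q ->
          (is_child p q <-> is_child (f p) (f q))].

(* w \in B_n is encoded by s = [:: w(-n); ...; w(-1)] : seq int.
   The full one-line word on positions -n < ... < -1 < 1 < ... < n is
   s ++ [:: w(1); ...; w(n)] = s ++ map -%R (rev s). *)
Definition full_word (s : seq int) : seq int := s ++ map -%R (rev s).

Definition has_incr4 (t : seq int) : bool :=
  [exists a : 'I_(size t), exists b : 'I_(size t), exists c : 'I_(size t),
   exists d : 'I_(size t),
    [&& (a < b)%N, (b < c)%N, (c < d)%N,
        nth 0 t a < nth 0 t b, nth 0 t b < nth 0 t c & nth 0 t c < nth 0 t d]].

Definition avoids1234 (s : seq int) : bool := ~~ has_incr4 (full_word s).

(* beta_l : values of absolute value < l are kept, the others are pushed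
   away from 0 by one (the paper writes x < -l / x > l; the boundary values
   x = -l, x = l must also be shifted so that w^{-i}_l is a signed
   permutation). *)
Definition beta (l : nat) (x : int) : int :=
  if `|x| < l%:Z then x
  else if x < 0 then x - 1
  else x + 1.

(* w^{-i}_l, for w encoded by s of size n, 1 <= i <= n+1 *)
Definition insert_at (s : seq int) (i l : nat) : seq int :=
  let n := size s in
  map (beta l) (take (n.+1 - i) s) ++ (l%:Z :: map (beta l) (drop (n.+1 - i) s)).

Definition maxneg (s : seq int) : nat :=
  foldr maxn 0%N [seq absz x | x <- s & 0 < x].

Definition BT_children (s : seq int) : seq (seq int) :=
  let n := size s in
  let m := maxneg s in
  undup [seq t <- [seq insert_at s i l | i <- iota 1 n.+1, l <- iota m.+1 (n.+1 - m)]
         | avoids1234 t].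

(* root [-1,-2,...,-j] of B_j : w(-k) = -(j+1-k), listed from w(-j) to w(-1) *)
Definition BT_root (j : nat) : seq int := [seq - (k%:Z) | k <- iota 1 j].

Definition irange (a b : int) : seq int :=
  if a <= b then [seq a + k%:Z | k <- iota 0 (absz (b - a + 1))] else [::].

Fixpoint sucN (x y : int) (z : nat) : seq (int * int * int) :=
  match z with
  | 0%N => [::]
  | 1%N => [seq (a, y + 1, 1) | a <- irange 2 (x + 1)]
           ++ [seq (x, b, 1) | b <- irange (x + 1) y]
  | k.+1 => [seq (a, y + 1, z%:Z) | a <- irange 2 (x + 1)] ++ sucN x y k
  end.

Definition suc (L : int * int * int) : seq (int * int * int) :=
  if 1 <= L.2 then sucN L.1.1 L.1.2 (absz L.2) else [::].

Definition T_root (j : nat) : int * int * int := (j.+1%:Z, j.+1%:Z, j.+1%:Z).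

From mathcomp Require Import all_boot all_order all_algebra zify.
Set Implicit Arguments. Unset Strict Implicit. Unset Printing Implicit Defensive.
Import Order.TTheory GRing.Theory Num.Theory.
Local Open Scope ring_scope.

(* Label a vertex w of BT^j(1234), encoded by s = [w(-n); ...; w(-1)], by (x, y, z): x - 1
   and y - 1 are the lengths of the longest prefixes of s with no increasing subsequence of
   length 2 and 3, and z = n + 1 - m.  Inserting a new value l > m after the first p entries
   creates a 1234 exactly when these p entries contain a 12 (if l <= n) or a 123 (if
   l = n + 1): an increasing subsequence of the full word through l (or, by symmetry, -l)
   can continue past it by at most one entry, because the entries below -m decrease.
   Computing the labels of the surviving children shows that the labelling maps the
   children of every vertex bijectively onto suc of its label, so it is an isomorphism of
   rooted trees. *)

(** * Trees isomorphic through a labelling *)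

Section TreeIsoByLabels.
Variables (A B : eqType) (rA : A) (chA : A -> seq A) (rB : B) (chB : B -> seq B).
Variables (lab : B -> A) (inv : B -> Prop).
Hypothesis lab_root : lab rB = rA.
Hypothesis inv_root : inv rB.
Hypothesis inv_child : forall s t, inv s -> t \in chB s -> inv t.
Hypothesis lab_children : forall s, inv s -> chA (lab s) =i map lab (chB s).
Hypothesis lab_inj : forall s, inv s -> {in chB s &, injective lab}.

Definition child_of s L := nth s (chB s) (find (fun t => lab t == L) (chB s)).

Fixpoint lift_path s Ls :=
  if Ls is L :: Ls' then child_of s L :: lift_path (child_of s L) Ls' else [::].

Lemma child_ofP s L : inv s -> L \in chA (lab s) ->
  child_of s L \in chB s /\ lab (child_of s L) = L.
Proof.
move=> inv_s; rewrite lab_children // => /mapP[t t_s ->].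
have has_t : has (fun u => lab u == lab t) (chB s) by apply/hasP; exists t.
by split; [rewrite mem_nth // -has_find | apply/eqP; exact: (nth_find s has_t)].
Qed.

Lemma lab_child s t : inv s -> t \in chB s -> lab t \in chA (lab s).
Proof. by move=> inv_s t_s; rewrite lab_children // map_f. Qed.

Lemma child_of_lab s t : inv s -> t \in chB s -> child_of s (lab t) = t.
Proof.
move=> inv_s t_s; have [c_s lab_c] := child_ofP inv_s (lab_child inv_s t_s).
exact: (lab_inj inv_s c_s t_s lab_c).
Qed.

Lemma lift_pathP s Ls : inv s -> path (fun x y => y \in chA x) (lab s) Ls ->
  path (fun x y => y \in chB x) s (lift_path s Ls) /\ map lab (lift_path s Ls) = Ls.
Proof.
elim: Ls s => [|L Ls IH] s inv_s //= /andP[L_s path_Ls].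
have [c_s lab_c] := child_ofP inv_s L_s.
rewrite -lab_c in path_Ls; have [-> ->] := IH _ (inv_child inv_s c_s) path_Ls.
by rewrite c_s lab_c.
Qed.

Lemma lift_path_lab s ts : inv s -> path (fun x y => y \in chB x) s ts ->
  lift_path s (map lab ts) = ts /\ path (fun x y => y \in chA x) (lab s) (map lab ts).
Proof.
elim: ts s => [|t ts IH] s inv_s //= /andP[t_s path_ts].
rewrite child_of_lab //; have [-> ->] := IH _ (inv_child inv_s t_s) path_ts.
by rewrite lab_child.
Qed.

Lemma lift_path_rcons s Ls L :
  lift_path s (rcons Ls L) = rcons (lift_path s Ls) (child_of (last s (lift_path s Ls)) L).
Proof. by elim: Ls s => [|L' Ls IH] s //=; rewrite IH. Qed.

Lemma tree_iso_by_labels : tree_iso rA chA rB chB.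
Proof.
pose f p := rB :: lift_path rB (behead p); pose g := map lab.
have fK p : is_node rA chA p -> is_node rB chB (f p) /\ g (f p) = p.
  case: p => [|a Ls] //= /andP[/eqP-> path_Ls]; rewrite -lab_root in path_Ls.
  have [path_lift lab_lift] := lift_pathP inv_root path_Ls.
  by rewrite /f /g /= eqxx path_lift lab_lift lab_root.
have gK q : is_node rB chB q -> is_node rA chA (g q) /\ f (g q) = q.
  case: q => [|b ts] //= /andP[/eqP-> path_ts].
  by have [lift_ts ->] := lift_path_lab inv_root path_ts; rewrite lab_root eqxx /f /= lift_ts.
exists f, g; split=> // p q p_node q_node; split.
  case=> L ->; case: p p_node => [|a Ls] // _.
  by exists (child_of (last rB (lift_path rB Ls)) L); rewrite /f /= lift_path_rcons.
case=> t fq; exists (lab t).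
by rewrite -(proj2 (fK q q_node)) -(proj2 (fK p p_node)) fq /g map_rcons.
Qed.

End TreeIsoByLabels.

(** * Increasing subsequences *)

Lemma subseq_cat_split (T : eqType) (c s1 s2 : seq T) : subseq c (s1 ++ s2) ->
  exists c1 c2, [/\ c = c1 ++ c2, subseq c1 s1 & subseq c2 s2].
Proof.
case/subseqP=> m; rewrite size_cat => sz_m ->.
have sz_take : size (take (size s1) m) = size s1 by rewrite size_takel // sz_m leq_addr.
rewrite -(cat_take_drop (size s1) m) mask_cat //.
by exists (mask (take (size s1) m) s1), (mask (drop (size s1) m) s2); rewrite !mask_subseq.
Qed.

Lemma subseq_iota_sorted (I : seq nat) n :
  sorted ltn I -> {in I, forall i, i < n}%N -> subseq I (iota 0 n).
Proof.
move=> sorted_I lt_In; apply/subseq_uniqP; first exact: iota_uniq.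
apply: (irr_sorted_eq ltn_trans ltnn sorted_I).
  exact: (sorted_filter ltn_trans _ (iota_ltn_sorted 0 n)).
by move=> i; rewrite mem_filter mem_iota /=; case: (boolP (i \in I)) => // /lt_In ->.
Qed.

Section IncreasingSubsequences.
Variables (disp : Order.disp_t) (T : porderType disp).
Implicit Types (s t c A W : seq T) (x : T).
Local Open Scope order_scope.

Definition has_incr (k : nat) s : bool :=
  [exists m : (size s).-tuple bool, (size (mask m s) == k) && sorted <%O (mask m s)].
Arguments has_incr k%_N s : simpl never.

Lemma has_incrP k s :
  reflect (exists c, [/\ size c = k, subseq c s & sorted <%O c]) (has_incr k s).
Proof.
apply: (iffP existsP) => [[m /andP[/eqP sz_m sorted_m]] | [c [sz_c sub_cs sorted_c]]].
  by exists (mask m s); rewrite mask_subseq.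
case/subseqP: sub_cs sz_c sorted_c => m /eqP sz_m -> sz_c sorted_c.
by exists (Tuple sz_m); rewrite /= sz_c eqxx.
Qed.

Lemma has_incr0 s : has_incr 0 s.
Proof. by apply/has_incrP; exists [::]; rewrite sub0seq. Qed.

Lemma has_incr_nil k : has_incr k [::] = (k == 0%N).
Proof.
apply/has_incrP/eqP => [[c [<-]]|->]; first by rewrite subseq0 => /eqP ->.
by exists [::].
Qed.

Lemma has_incr1 s : has_incr 1 s = (s != [::]).
Proof.
apply/has_incrP/idP => [[[|x [|y c]] [//= _ sub_xs _]] | ].
  by case: s sub_xs.
by case: s => // x s _; exists [:: x]; rewrite sub1seq mem_head.
Qed.

Lemma has_incr_subseq k s t : subseq s t -> has_incr k s -> has_incr k t.
Proof.
move=> sub_st /has_incrP[c [sz_c sub_cs sorted_c]].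
by apply/has_incrP; exists c; split=> //; apply: subseq_trans sub_st.
Qed.

Lemma has_incr_le k k' s : (k <= k')%N -> has_incr k' s -> has_incr k s.
Proof.
move=> le_kk' /has_incrP[c [sz_c sub_cs sorted_c]]; apply/has_incrP.
exists (take k c); rewrite size_takel ?sz_c //; split=> //.
  exact: subseq_trans (take_subseq _ _) sub_cs.
exact: take_sorted.
Qed.

Lemma has_incr_sorted_gt k s : sorted >%O s -> has_incr k s -> (k <= 1)%N.
Proof.
move=> sorted_s /has_incrP[[|x [|y c]] [<- // sub_cs]] /= /andP[lt_xy _].
have /= /andP[lt_yx _] := subseq_sorted (rev_trans lt_trans) sub_cs sorted_s.
by have := lt_trans lt_xy lt_yx; rewrite ltxx.
Qed.

Lemma has_incr_cat k A W : has_incr k (A ++ W) ->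
  exists i j, [/\ (i + j)%N = k, has_incr i A & has_incr j W].
Proof.
case/has_incrP=> c [<- /subseq_cat_split[c1 [c2 [-> sub1 sub2]]] /cat_sorted2[sorted1 sorted2]].
by exists (size c1), (size c2); rewrite size_cat; split=> //; apply/has_incrP;
  [exists c1 | exists c2].
Qed.

Lemma has_incr_pivot k x A W : has_incr k.+1 (A ++ x :: W) ->
  has_incr k.+1 (A ++ W) \/
  exists i j, [/\ (i + j)%N = k, has_incr i A & has_incr j [seq y <- W | x < y]].
Proof.
case/has_incrP=> c [sz_c /subseq_cat_split[c1 [c2 [def_c sub1 sub2]]] sorted_c]; subst c.
case: c2 sub2 sz_c sorted_c => [_ | y c2].
  rewrite cats0 => sz_c sorted_c; left; apply/has_incrP; exists c1.
  by split=> //; apply: subseq_trans sub1 (prefix_subseq _ _).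
rewrite /=; case: eqP => [-> sub2 | _ sub2] sz_c sorted_c; last first.
  by left; apply/has_incrP; exists (c1 ++ y :: c2); rewrite cat_subseq.
have [sorted1 /=] := cat_sorted2 sorted_c; rewrite path_sortedE; last exact: lt_trans.
case/andP=> gt_c2 sorted2; right; exists (size c1), (size c2).
move: sz_c; rewrite size_cat addnS => -[sz_c]; split=> //; apply/has_incrP.
  by exists c1.
by exists c2; rewrite subseq_filter gt_c2.
Qed.
Lemma has_incr_through i j x A W : {in A, forall y, y < x} ->
  has_incr i A -> has_incr j [seq y <- W | x < y] -> has_incr (i + j).+1 (A ++ x :: W).
Proof.
move=> lt_Ax /has_incrP[c1 [<- sub1 sorted1]] /has_incrP[c2 [<- +sorted2]].
rewrite subseq_filter => /andP[gt_c2 sub2].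
apply/has_incrP; exists (c1 ++ x :: c2); split.
- by rewrite size_cat addnS.
- by rewrite cat_subseq //= eqxx.
rewrite sorted_cat_cons path_sortedE ?gt_c2 ?sorted2 ?andbT; last exact: lt_trans.
case: c1 sub1 sorted1 => [//|z c1] sub1 /= sorted1; rewrite rcons_path sorted1.
by apply: lt_Ax; apply: (mem_subseq sub1); apply: mem_last.
Qed.

Lemma has_incr_max k x A W : {in A ++ W, forall y, y < x} ->
  has_incr k.+1 (A ++ x :: W) = has_incr k.+1 (A ++ W) || has_incr k A.
Proof.
move=> lt_AWx; have lt_Ax : {in A, forall y, y < x}.
  by move=> y y_A; apply: lt_AWx; rewrite mem_cat y_A.
have gt_W : [seq y <- W | x < y] = [::].
  rewrite (@eq_in_filter _ _ pred0) ?filter_pred0 // => y y_W.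
  by apply: lt_gtF; apply: lt_AWx; rewrite mem_cat y_W orbT.
apply/idP/orP => [/has_incr_pivot[|[i [j [<- inc_A]]]] | [inc_AW | inc_A]].
- by left.
- by rewrite gt_W has_incr_nil => /eqP->; rewrite addn0; right.
- exact: has_incr_subseq (cat_subseq (subseq_refl A) (subseq_cons W x)) inc_AW.
by rewrite -[k]addn0; apply: has_incr_through; rewrite ?gt_W ?has_incr0.
Qed.

End IncreasingSubsequences.

Section IncreasingPrefixes.
Variables (disp : Order.disp_t) (T : porderType disp).
Implicit Types (s : seq T) (x : T).
Local Open Scope order_scope.

Definition incr_prefix k s : nat :=
  find (fun q => has_incr k (take q s)) (iota 0 (size s).+1).
Arguments incr_prefix k%_N s : simpl never.

Lemma incr_prefix_le k s : (incr_prefix k s <= (size s).+1)%N.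
Proof. by rewrite -[X in (_ <= X)%N](size_iota 0) find_size. Qed.

Lemma incr_prefixP k s q : (q <= size s)%N ->
  has_incr k (take q s) = (incr_prefix k s <= q)%N.
Proof.
move=> le_qs; have nth_q r : (r <= size s)%N -> nth 0%N (iota 0 (size s).+1) r = r.
  by move=> le_rs; rewrite nth_iota.
apply/idP/idP => [inc_q | le_fq].
  by rewrite leqNgt; apply/negP => /(before_find 0%N); rewrite nth_q // inc_q.
have lt_fs : (incr_prefix k s < (size s).+1)%N by apply: leq_ltn_trans le_fq _.
have has_f : has (fun r => has_incr k (take r s)) (iota 0 (size s).+1).
  by rewrite has_find size_iota; exact: lt_fs.
have := nth_find 0%N has_f; rewrite nth_q; last exact: lt_fs.
by apply: has_incr_subseq; rewrite -(take_takel s le_fq) take_subseq.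
Qed.

Lemma incr_prefix_eq k s c : (c <= (size s).+1)%N ->
  (forall q, (q <= size s)%N -> has_incr k (take q s) = (c <= q)%N) ->
  incr_prefix k s = c.
Proof.
move=> le_cs incr_c; have le_fs := incr_prefix_le k s.
apply/eqP; rewrite eqn_leq; apply/andP; split.
  have [le_c_s|] := leqP c (size s); last by apply: leq_trans.
  by rewrite -incr_prefixP // incr_c.
have [le_f_s|] := leqP (incr_prefix k s) (size s); last by apply: leq_trans.
by rewrite -incr_c // incr_prefixP.
Qed.

Lemma incr_prefix_mono k k' s : (k <= k')%N -> (incr_prefix k s <= incr_prefix k' s)%N.
Proof.
move=> le_kk'; have [le_f's | lt_sf'] := leqP (incr_prefix k' s) (size s).
  by rewrite -incr_prefixP //; apply: has_incr_le le_kk' _; rewrite incr_prefixP.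
exact: leq_trans (incr_prefix_le k s) lt_sf'.
Qed.

Lemma incr_prefix1 s : incr_prefix 1 s = 1%N.
Proof.
apply: incr_prefix_eq => // q le_qs.
by rewrite has_incr1 -size_eq0 size_takel // lt0n.
Qed.

Lemma incr_prefix_sorted_gt k s : sorted >%O s -> incr_prefix k.+2 s = (size s).+1.
Proof.
move=> sorted_s; apply: incr_prefix_eq => // q le_qs.
rewrite ltnNge le_qs; apply: negbTE; apply/negP.
by move/(has_incr_sorted_gt (take_sorted _ sorted_s)).
Qed.

Lemma incr_prefix_insert_max k p x s : (p <= size s)%N -> {in s, forall y, y < x} ->
  incr_prefix k.+1 (take p s ++ x :: drop p s) =
  if (p < incr_prefix k s)%N then (incr_prefix k.+1 s).+1
  else minn p.+1 (incr_prefix k.+1 s).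
Proof.
move=> le_ps lt_sx; have le_k := incr_prefix_mono s (leqnSn k).
have sz_p : size (take p s) = p by rewrite size_takel.
have sz_ins : size (take p s ++ x :: drop p s) = (size s).+1.
  by rewrite size_cat /= size_drop sz_p addnS (subnKC le_ps).
apply: incr_prefix_eq => [|q]; rewrite sz_ins.
  case: ifP => _; first exact: incr_prefix_le.
  by rewrite geq_min ltnS leqW.
move=> le_qs; have [le_qp | lt_pq] := leqP q p.
  rewrite takel_cat ?sz_p // take_takel // incr_prefixP; last exact: leq_trans le_qp le_ps.
  by case: ifP; lia.
have def_q : q = (p + (q - p).-1.+1)%N by lia.
move: le_qs; rewrite {}def_q; set r := (q - p).-1 => le_prs.
have le_prs' : (p + r <= size s)%N by lia.
rewrite take_cat sz_p ltnNge leq_addr /= addKn /= has_incr_max; last first.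
  by move=> y; rewrite mem_cat => /orP[/mem_take | /mem_take/mem_drop] /lt_sx.
rewrite -takeD (incr_prefixP _ le_prs') (incr_prefixP _ le_ps).
by case: ifP; lia.
Qed.

End IncreasingPrefixes.

Section MonotoneMaps.
Variables (disp disp' : Order.disp_t) (T : porderType disp) (T' : porderType disp').
Variable f : T -> T'.
Implicit Types (s c : seq T).
Local Open Scope order_scope.

Lemma has_incr_map k s : {mono f : x y / x < y} -> has_incr k (map f s) = has_incr k s.
Proof.
move=> f_mono; apply/has_incrP/has_incrP => [[c [<- /subseqP[m sz_m ->]]] | [c [<- sub_c]]].
  by rewrite -map_mask (mono_sorted f_mono) => sorted_c; exists (mask m s);
    rewrite size_map mask_subseq.
by rewrite -(mono_sorted f_mono); exists (map f c); rewrite size_map map_subseq.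
Qed.

Lemma sorted_rev_map c : {mono f : x y /~ x < y} ->
  sorted <%O (map f (rev c)) = sorted <%O c.
Proof. by move=> f_anti; rewrite sorted_map rev_sorted; apply: eq_sorted => x y /=. Qed.

Lemma has_incr_rev_map k s : {mono f : x y /~ x < y} ->
  has_incr k (map f (rev s)) = has_incr k s.
Proof.
move=> f_anti; apply/has_incrP/has_incrP => [[c [<- /subseqP[m]]] | [c [<- sub_c]]].
  rewrite size_map size_rev -(size_rev m) => sz_m ->.
  rewrite -map_mask -[m]revK -rev_mask // sorted_rev_map // => sorted_c.
  by exists (mask (rev m) s); rewrite mask_subseq size_map size_rev.
rewrite -(sorted_rev_map _ f_anti) => sorted_c; exists (map f (rev c)).
by rewrite size_map size_rev map_subseq ?subseq_rev.
Qed.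

Lemma incr_prefix_map k s : {mono f : x y / x < y} ->
  incr_prefix k (map f s) = incr_prefix k s.
Proof.
move=> f_mono; rewrite /incr_prefix size_map; apply: eq_find => q.
by rewrite -map_take has_incr_map.
Qed.

End MonotoneMaps.

(** * Signed permutations and insertion *)

Lemma has_incr4E t : has_incr4 t = has_incr 4 t.
Proof.
apply/existsP/has_incrP => [[a /existsP[b /existsP[c /existsP[d]]]] | ].
  case/and3P=> lt_ab lt_bc /and4P[lt_cd lt1 lt2 lt3].
  exists (map (nth 0 t) [:: val a; val b; val c; val d]); split; rewrite /= ?lt1 ?lt2 ?lt3 //.
  have /(map_subseq (nth 0 t)) : subseq [:: val a; val b; val c; val d] (iota 0 (size t)).
    rewrite subseq_iota_sorted /= ?lt_ab ?lt_bc ?lt_cd // => i.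
    by rewrite !inE => /or4P[] /eqP->.
  by rewrite -/(mkseq _ _) mkseq_nth.
case=> s [sz_s /subseqP[m sz_m def_s] sorted_s].
set I := mask m (iota 0 (size t)).
have s_I : s = map (nth 0 t) I by rewrite def_s map_mask -/(mkseq _ _) mkseq_nth.
have sorted_I : sorted ltn I := sorted_mask ltn_trans m (iota_ltn_sorted 0 _).
have lt_It : {subset I <= gtn (size t)} by move=> i /mem_mask; rewrite mem_iota.
move: sz_s sorted_s sorted_I lt_It; rewrite {}s_I.
case: I => [|a [|b [|c [|d [|]]]]] //= _ /and4P[lt1 lt2 lt3 _] /and4P[lt_ab lt_bc lt_cd _].
move=> lt_It; have [a_t b_t c_t d_t] : [/\ a < size t, b < size t, c < size t & d < size t]%N.
  by split; apply: lt_It; rewrite !inE eqxx ?orbT.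
exists (Ordinal a_t); apply/existsP; exists (Ordinal b_t); apply/existsP.
exists (Ordinal c_t); apply/existsP; exists (Ordinal d_t).
by rewrite /= lt_ab lt_bc lt_cd lt1 lt2 lt3.
Qed.

Definition mirror (s : seq int) : seq int := map -%R (rev s).

Lemma full_wordE s : full_word s = s ++ mirror s.
Proof. by []. Qed.

Lemma mirrorK : involutive mirror.
Proof. by move=> s; rewrite /mirror map_rev -map_comp (eq_map opprK) map_id revK. Qed.

Lemma mirror_cat s t : mirror (s ++ t) = mirror t ++ mirror s.
Proof. by rewrite /mirror rev_cat map_cat. Qed.

Lemma mirror_cons x s : mirror (x :: s) = rcons (mirror s) (- x).
Proof. by rewrite /mirror rev_cons map_rcons. Qed.

Lemma has_incr_mirror k s : has_incr k (mirror s) = has_incr k s.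
Proof. by apply: has_incr_rev_map => x y; rewrite ltrN2. Qed.

Lemma sorted_gt_mirror s : sorted >%R (mirror s) = sorted >%R s.
Proof. by rewrite sorted_map rev_sorted; apply: eq_sorted => x y /=; rewrite ltrN2. Qed.

Lemma full_word_insert A D x :
  full_word (A ++ x :: D) = A ++ x :: (D ++ mirror D) ++ - x :: mirror A.
Proof. by rewrite full_wordE mirror_cat mirror_cons -cats1 -!catA. Qed.

(* The entries of [D ++ mirror (A ++ D)] above [x] decrease, so an increasing subsequence
   through the new entry [x] continues past it by at most one entry; one through [- x] is
   the mirror image of one through [x]. *)
Lemma has_incr4_full_insert A D x : 0 < x -> {in A, forall y, y < x} ->
  sorted >%R [seq y <- D ++ mirror (A ++ D) | x < y] ->
  has_incr 4 (full_word (A ++ x :: D)) =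
  [|| has_incr 4 (full_word (A ++ D)), has_incr 3 A
    | has_incr 2 A && has (fun y => x < y) (D ++ mirror (A ++ D))].
Proof.
move=> x_gt0 lt_Ax; rewrite has_filter mirror_cat.
set G := [seq y <- _ | x < y] => sorted_G.
have through_x V : [seq y <- V | x < y] = G -> has_incr 4 (A ++ x :: V) ->
    has_incr 4 (A ++ V) \/ has_incr 3 A || has_incr 2 A && (G != [::]).
  move=> VG /has_incr_pivot[|[i [j [ij inc_A]]]]; first by left.
  rewrite VG => inc_G; right; have := has_incr_sorted_gt sorted_G inc_G.
  case: j ij inc_G => [|[|//]] + inc_G _; rewrite ?addn0 ?addn1 => -[ij]; subst i.
    by rewrite inc_A.
  by rewrite inc_A -has_incr1 inc_G orbT.
have nlt_x : (x < - x) = false by lia.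
rewrite full_word_insert full_wordE mirror_cat -!catA.
have filter_x : [seq y <- D ++ mirror D ++ - x :: mirror A | x < y] = G.
  by rewrite !filter_cat /= nlt_x /G !filter_cat.
apply/idP/idP => [inc4 | ].
  case/through_x: inc4 => [|inc4|->]; last 1 [by rewrite orbT].
    exact: filter_x.
  have mirror_inc : A ++ D ++ mirror D ++ - x :: mirror A =
                    mirror (A ++ x :: (D ++ mirror D ++ mirror A)).
    by rewrite !(mirror_cat, mirror_cons, mirrorK) -cats1 -!catA.
  rewrite mirror_inc has_incr_mirror in inc4; case/through_x: inc4 => [//|inc4|->].
    by rewrite inc4.
  by rewrite orbT.
case/or3P => [inc4 | inc3 | /andP[inc2 G_ne]].
- apply: has_incr_subseq inc4; apply: cat_subseq (subseq_refl A) _.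
  apply: subseq_trans (subseq_cons _ x); rewrite !catA.
  exact: cat_subseq (subseq_refl _) (subseq_cons _ _).
- exact: (has_incr_through lt_Ax inc3 (has_incr0 _)).
by apply: (has_incr_through lt_Ax inc2); rewrite filter_x has_incr1.
Qed.

Section Beta.
Variable l : nat.
Hypothesis l_gt0 : (0 < l)%N.

Lemma beta_mono : {mono beta l : x y / x < y}.
Proof. by move=> x y; rewrite /beta; repeat case: ifP; lia. Qed.

Lemma betaN x : beta l (- x) = - beta l x.
Proof. by rewrite /beta; repeat case: ifP; lia. Qed.

Lemma beta_ltl x : (beta l x < l%:Z) = (x < l%:Z).
Proof. by rewrite /beta; repeat case: ifP; lia. Qed.

Lemma beta_gtl x : (l%:Z < beta l x) = (l%:Z <= x).
Proof. by rewrite /beta; repeat case: ifP; lia. Qed.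

Lemma beta_ltNl x : (beta l x < - l%:Z) = (x <= - l%:Z).
Proof. by rewrite /beta; repeat case: ifP; lia. Qed.

Lemma beta_ge x : x - 1 <= beta l x.
Proof. by rewrite /beta; repeat case: ifP; lia. Qed.

Lemma beta_leNl x : x <= - l%:Z -> beta l x = x - 1.
Proof. by rewrite /beta; repeat case: ifP; lia. Qed.

Lemma sorted_gt_map_beta s : sorted >%R (map (beta l) s) = sorted >%R s.
Proof. exact: (@mono_sorted _ _ (beta l) >%R >%R (fun x y => beta_mono y x)). Qed.

Lemma map_beta_mirror s : map (beta l) (mirror s) = mirror (map (beta l) s).
Proof. by rewrite /mirror -map_rev -!map_comp; apply: eq_map => x /=; rewrite betaN. Qed.

End Beta.

Lemma maxneg_le s (b : nat) : (maxneg s <= b)%N = all (fun x => x <= b%:Z) s.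
Proof.
elim: s => [|x s IH] //=; rewrite -IH /maxneg /=.
by case: ifP => x_gt0 /=; rewrite ?geq_max; lia.
Qed.

Lemma maxneg_lt s l : (maxneg s < l)%N -> {in s, forall x, x < l%:Z}.
Proof.
move=> lt_ml x x_s; have := leqnn (maxneg s); rewrite maxneg_le => /allP/(_ x x_s).
lia.
Qed.

Definition bt_insert (s : seq int) (p l : nat) : seq int :=
  map (beta l) (take p s) ++ l%:Z :: map (beta l) (drop p s).

Lemma insert_atE s i l : insert_at s i l = bt_insert s ((size s).+1 - i) l.
Proof. by []. Qed.

Lemma bt_insertE s p l :
  bt_insert s p l = take p (map (beta l) s) ++ l%:Z :: drop p (map (beta l) s).
Proof. by rewrite /bt_insert map_take map_drop. Qed.

Lemma size_bt_insert s p l : (p <= size s)%N -> size (bt_insert s p l) = (size s).+1.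
Proof. by move=> le_ps; rewrite bt_insertE size_cat /= size_drop size_takel ?size_map; lia. Qed.

Lemma maxneg_bt_insert s p l : (maxneg s < l)%N -> maxneg (bt_insert s p l) = l.
Proof.
move=> lt_ml; have lt_sl := maxneg_lt lt_ml; apply/eqP; rewrite eqn_leq; apply/andP; split.
  rewrite maxneg_le; apply/allP => y; rewrite mem_cat inE.
  by case/or3P=> [/mapP[x /mem_take/lt_sl ? ->] | /eqP-> | /mapP[x /mem_drop/lt_sl ? ->]];
    rewrite ?lexx // ltW // beta_ltl //; lia.
have := leqnn (maxneg (bt_insert s p l)); rewrite maxneg_le => /allP/(_ l%:Z).
by rewrite mem_cat inE eqxx orbT => /(_ isT); rewrite lez_nat.
Qed.

(* The properties of the vertices of BT^j(1234) that the proof uses; the encoded words are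
   never required to be signed permutations. *)
Record bt_vertex (s : seq int) : Prop := BtVertex {
  bt_avoids : avoids1234 s;
  bt_ge : {in s, forall x, - (size s)%:Z <= x};
  bt_sorted : sorted >%R [seq x <- s | x < - (maxneg s)%:Z];
  bt_maxneg : (maxneg s <= size s)%N;
  bt_min : (maxneg s < size s)%N -> exists2 x, x \in s & x <= - (size s)%:Z }.

Lemma bt_sorted_le s l : bt_vertex s -> (maxneg s < l)%N ->
  sorted >%R [seq x <- s | x <= - l%:Z].
Proof.
case=> _ _ sorted_s _ _ lt_ml.
have -> : [seq x <- s | x <= - l%:Z] =
          [seq x <- [seq x <- s | x < - (maxneg s)%:Z] | x <= - l%:Z].
  by rewrite -filter_predI; apply: eq_filter => x /=; lia.
exact: (sorted_filter (rev_trans lt_trans) _ sorted_s).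
Qed.

Lemma bt_sorted_mirror s l : bt_vertex s -> (maxneg s < l)%N ->
  sorted >%R [seq y <- mirror s | l%:Z <= y].
Proof.
move=> bt_s lt_ml.
have -> : [seq y <- mirror s | l%:Z <= y] = mirror [seq x <- s | x <= - l%:Z].
  by rewrite /mirror filter_map filter_rev; congr (map _ (rev _)); apply: eq_filter => x /=; lia.
by rewrite sorted_gt_mirror (bt_sorted_le bt_s lt_ml).
Qed.

Lemma bt_has_mirror_ge s l : bt_vertex s -> (maxneg s < l <= (size s).+1)%N ->
  has (fun y => l%:Z <= y) (mirror s) = (l != (size s).+1).
Proof.
case=> _ ge_s _ _ min_s /andP[lt_ml le_ln]; case: eqP => [-> | ne_ln].
  by apply/hasP => -[y /mapP[x]]; rewrite mem_rev => /ge_s ? ->; lia.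
have [|w w_s le_wn] := min_s; first lia.
by apply/hasP; exists (- w); [rewrite map_f ?mem_rev | lia].
Qed.

Lemma has_incr4_bt_insert s p l : bt_vertex s -> (p <= size s)%N ->
  (maxneg s < l <= (size s).+1)%N ->
  has_incr 4 (full_word (bt_insert s p l)) =
  has_incr (if l == (size s).+1 then 3 else 2)%N (take p s).
Proof.
move=> bt_s le_ps /andP[lt_ml le_ln]; have l_gt0 : (0 < l)%N by lia.
set t := map (beta l) s.
have full_t : full_word t = map (beta l) (full_word s).
  by rewrite !full_wordE map_cat map_beta_mirror.
have take_t k : has_incr k (take p t) = has_incr k (take p s).
  by rewrite -map_take (has_incr_map _ _ (beta_mono l_gt0)).
have high_t : [seq y <- drop p t ++ mirror t | l%:Z < y] =
              map (beta l) [seq y <- mirror s | l%:Z <= y].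
  rewrite -(map_beta_mirror l_gt0) filter_cat filter_map.
  rewrite (@eq_in_filter _ _ pred0 (drop p t)) ?filter_pred0; last first.
    by move=> y /mem_drop/mapP[x /(maxneg_lt lt_ml) ? ->] /=; rewrite beta_gtl; lia.
  by congr map; apply: eq_filter => y /=; rewrite beta_gtl.
have lt_take : {in take p t, forall y, y < l%:Z}.
  by move=> y /mem_take/mapP[x /(maxneg_lt lt_ml) ? ->]; rewrite beta_ltl.
have sorted_high : sorted >%R [seq y <- drop p t ++ mirror (take p t ++ drop p t) | l%:Z < y].
  by rewrite cat_take_drop high_t sorted_gt_map_beta // (bt_sorted_mirror bt_s).
have l_gt0' : 0 < l%:Z by rewrite ltz_nat.
rewrite bt_insertE (has_incr4_full_insert l_gt0' lt_take sorted_high).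
rewrite cat_take_drop full_t (has_incr_map _ _ (beta_mono l_gt0)) -has_incr4E.
rewrite (negbTE (bt_avoids bt_s)) /=.
rewrite !take_t has_filter high_t -size_eq0 size_map size_eq0 -has_filter.
rewrite (bt_has_mirror_ge bt_s) ?lt_ml //; case: eqP => _; rewrite ?andbT ?andbF ?orbF //.
by apply/idP/idP => [/orP[/(has_incr_le (leqnSn 2)) | ] | ->] //; rewrite orbT.
Qed.

Lemma avoids1234_bt_insert s p l : bt_vertex s -> (p <= size s)%N ->
  (maxneg s < l <= (size s).+1)%N ->
  avoids1234 (bt_insert s p l) =
  (p < incr_prefix (if l == (size s).+1 then 3 else 2) s)%N.
Proof.
move=> bt_s le_ps ml_ln; rewrite /avoids1234 has_incr4E has_incr4_bt_insert //.
by rewrite incr_prefixP // ltnNge.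
Qed.

Definition bt_admissible s p l := [&& (maxneg s < l)%N, (l <= (size s).+1)%N &
  (p < incr_prefix (if l == (size s).+1 then 3 else 2) s)%N].

Lemma bt_admissible_size s p l : bt_admissible s p l -> (p <= size s)%N.
Proof.
by case/and3P=> _ _ /leq_trans/(_ (incr_prefix_le _ _)); rewrite ltnS.
Qed.

Lemma bt_admissible_lt3 s p l : bt_admissible s p l -> (p < incr_prefix 3 s)%N.
Proof.
case/and3P=> _ _; case: eqP => // _ /leq_trans; apply.
exact: incr_prefix_mono.
Qed.

Lemma mem_BT_children s t : bt_vertex s ->
  t \in BT_children s <-> exists p l, bt_admissible s p l /\ t = bt_insert s p l.
Proof.
move=> bt_s; have le_mn := bt_maxneg bt_s.
rewrite /BT_children mem_undup mem_filter; split.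
  case/andP=> + /allpairsP[[i l] [i_in l_in def_t]]; rewrite {t}def_t.
  move: i_in l_in; rewrite !mem_iota /= => /andP[i_ge i_lt] /andP[l_ge l_lt].
  rewrite insert_atE avoids1234_bt_insert; [|by []|lia|lia] => lt_p.
  by exists ((size s).+1 - i)%N, l; rewrite /bt_admissible lt_p andbT; split=> //; lia.
case=> p [l [adm ->]]; have le_ps := bt_admissible_size adm.
move: adm => /and3P[lt_ml le_ln lt_p].
rewrite avoids1234_bt_insert ?lt_ml // lt_p; apply/allpairsP.
exists ((size s).+1 - p, l)%N; rewrite !mem_iota /= insert_atE subKn ?(leqW le_ps) //.
by split; [lia | lia | ].
Qed.

Lemma bt_vertex_insert s p l : bt_vertex s -> bt_admissible s p l -> bt_vertex (bt_insert s p l).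
Proof.
move=> bt_s adm; have le_ps := bt_admissible_size adm.
move: adm => /and3P[lt_ml le_ln lt_p]; have l_gt0 : (0 < l)%N by lia.
have [_ ge_s _ le_mn min_s] := bt_s.
split; rewrite ?size_bt_insert ?maxneg_bt_insert //.
- by rewrite avoids1234_bt_insert ?lt_ml.
- move=> y; rewrite bt_insertE mem_cat inE => /or3P[/mem_take | /eqP-> | /mem_drop].
  + by case/mapP=> x /ge_s ge_x ->; have := beta_ge l_gt0 x; lia.
  + lia.
  by case/mapP=> x /ge_s ge_x ->; have := beta_ge l_gt0 x; lia.
- have nlt_l : (l%:Z < - l%:Z) = false by lia.
  rewrite bt_insertE filter_cat /= nlt_l -filter_cat cat_take_drop filter_map.
  rewrite (eq_filter (a2 := fun x => x <= - l%:Z)); last by move=> x /=; rewrite beta_ltNl.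
  by rewrite sorted_gt_map_beta // bt_sorted_le.
- move=> lt_ln; have [|w w_s le_wn] := min_s; first lia.
  exists (beta l w); last by rewrite beta_leNl //; lia.
  move: (map_f (beta l) w_s); rewrite -(cat_take_drop p (map (beta l) s)) mem_cat.
  by rewrite bt_insertE mem_cat inE => /orP[] ->; rewrite ?orbT.
Qed.

(** * Labels *)

Definition bt_label (s : seq int) : int * int * int :=
  ((incr_prefix 2 s)%:Z, (incr_prefix 3 s)%:Z, ((size s).+1 - maxneg s)%:Z).

Lemma bt_label_insert s p l : bt_vertex s -> bt_admissible s p l ->
  bt_label (bt_insert s p l) =
  ((if p == 0%N then (incr_prefix 2 s).+1 else minn p.+1 (incr_prefix 2 s))%:Z,
   (if (p < incr_prefix 2 s)%N then (incr_prefix 3 s).+1 else p.+1)%:Z,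
   ((size s).+2 - l)%:Z).
Proof.
move=> bt_s adm; have le_ps := bt_admissible_size adm.
have lt_py := bt_admissible_lt3 adm.
move: adm => /and3P[lt_ml le_ln _]; have l_gt0 : (0 < l)%N by lia.
have lt_tl : {in map (beta l) s, forall z, z < l%:Z}.
  by move=> _ /mapP[z /(maxneg_lt lt_ml) ? ->]; rewrite beta_ltl.
have le_pt : (p <= size (map (beta l) s))%N by rewrite size_map.
rewrite /bt_label size_bt_insert // maxneg_bt_insert // bt_insertE.
rewrite !incr_prefix_insert_max // !incr_prefix_map ?incr_prefix1; try exact: beta_mono.
by congr (_, _, _); rewrite ?ltnS ?leqn0 ?(minn_idPl lt_py) //; congr Posz; lia.
Qed.

Lemma mem_irange (a lo hi : int) : (a \in irange lo hi) = (lo <= a <= hi).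
Proof.
rewrite /irange; case: ifP => le_lohi; last by rewrite in_nil; lia.
apply/mapP/idP => [[k + ->] | /andP[le_a ge_a]]; first by rewrite mem_iota; lia.
by exists (absz (a - lo)); [rewrite mem_iota | ]; lia.
Qed.

Lemma mem_irange_fst (a b c b0 c0 lo hi : int) :
  ((a, b, c) \in [seq (u, b0, c0) | u <- irange lo hi]) = [&& lo <= a <= hi, b == b0 & c == c0].
Proof.
apply/mapP/idP => [[u + [-> -> ->]] | /and3P[a_in /eqP-> /eqP->]].
  by rewrite mem_irange !eqxx !andbT.
by exists a => //; rewrite mem_irange.
Qed.

Lemma mem_irange_snd (a b c a0 c0 lo hi : int) :
  ((a, b, c) \in [seq (a0, v, c0) | v <- irange lo hi]) = [&& a == a0, lo <= b <= hi & c == c0].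
Proof.
apply/mapP/idP => [[v + [-> -> ->]] | /and3P[/eqP-> b_in /eqP->]].
  by rewrite mem_irange !eqxx !andbT.
by exists b => //; rewrite mem_irange.
Qed.

Lemma mem_sucN (x y : int) (z : nat) (a b c : int) : (0 < z)%N ->
  ((a, b, c) \in sucN x y z) =
  [&& b == y + 1, (2 : int) <= a <= x + 1 & (1 : int) <= c <= z%:Z]
  || [&& a == x, x + 1 <= b <= y & c == 1].
Proof.
elim: z => [|[|z] IH] // _.
  by rewrite /= mem_cat mem_irange_fst mem_irange_snd; lia.
have -> : sucN x y z.+2 =
  [seq (u, y + 1, z.+2%:Z) | u <- irange 2 (x + 1)] ++ sucN x y z.+1 by [].
by rewrite mem_cat mem_irange_fst IH //; lia.
Qed.

Lemma suc_bt_label s : bt_vertex s -> suc (bt_label s) =i map bt_label (BT_children s).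
Proof.
move=> bt_s [[a b] c]; have le_mn := bt_maxneg bt_s.
have x_gt0 : (0 < incr_prefix 2 s)%N by rewrite -(incr_prefix1 s) incr_prefix_mono.
have le_xy : (incr_prefix 2 s <= incr_prefix 3 s)%N by rewrite incr_prefix_mono.
have le_yn := incr_prefix_le 3 s.
rewrite {1}/bt_label /suc /= ifT; last lia.
rewrite mem_sucN; last lia.
apply/idP/mapP => [|[t /(mem_BT_children _ bt_s)[p [l [adm {t}->]]]]]; last first.
  have le_ps := bt_admissible_size adm; move: (adm) => /and3P[lt_ml le_ln lt_p].
  rewrite bt_label_insert // => -[-> -> ->].
  have [lt_px | le_xp] := ltnP p (incr_prefix 2 s).
    by apply/orP; left; apply/and4P; split; try case: ifP; lia.
  have l_top : l = (size s).+1 by move: lt_p; case: eqP => [// | _ lt_p]; lia.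
  rewrite l_top eqxx in lt_p.
  by apply/orP; right; apply/and3P; split; try case: ifP; lia.
have child_label L p l : bt_admissible s p l -> bt_label (bt_insert s p l) = L ->
    exists2 t, t \in BT_children s & L = bt_label t.
  by move=> adm <-; exists (bt_insert s p l) => //; apply/mem_BT_children => //; exists p, l.
case/orP => [/and4P[/eqP-> a_rng c_ge c_le] | /and3P[/eqP-> b_rng /eqP->]].
  pose l := ((size s).+2 - absz c)%N.
  pose p := if a == (incr_prefix 2 s).+1%:Z then 0%N else (absz a).-1.
  have lt_px : (p < incr_prefix 2 s)%N by rewrite /p; case: ifP; lia.
  have adm : bt_admissible s p l by apply/and3P; split; [lia | lia | case: ifP; lia].
  apply: (child_label _ p l adm); rewrite bt_label_insert // lt_px.
  rewrite /p /l; case: (a =P _) => [a_top | a_ne] /=; first by congr (_, _, _); lia.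
  have -> : (`|a|.-1 == 0%N) = false by lia.
  by congr (_, _, _); lia.
pose p := (`|b|.-1)%N.
have adm : bt_admissible s p (size s).+1.
  by rewrite /bt_admissible eqxx; apply/and3P; split; lia.
apply: (child_label _ p _ adm); rewrite bt_label_insert //.
have -> : (p == 0%N) = false by lia.
have -> : (p < incr_prefix 2 s)%N = false by lia.
by congr (_, _, _); lia.
Qed.

Lemma bt_label_inj s : bt_vertex s -> {in BT_children s &, injective bt_label}.
Proof.
move=> bt_s t1 t2 /(mem_BT_children _ bt_s)[p1 [l1 [adm1 {t1}->]]].
move=> /(mem_BT_children _ bt_s)[p2 [l2 [adm2 {t2}->]]].
have lt_p1y := bt_admissible_lt3 adm1; have lt_p2y := bt_admissible_lt3 adm2.
rewrite !bt_label_insert // => -[eq_x eq_y eq_z].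
move: adm1 adm2 => /and3P[_ le_l1n _] /and3P[_ le_l2n _].
have -> : l1 = l2 by lia.
suff -> : p1 = p2 by [].
by move: eq_x eq_y; do 4 case: ifP => ?; lia.
Qed.

Lemma BT_root_sorted j : sorted >%R (BT_root j).
Proof.
rewrite /BT_root sorted_map; apply: (sub_sorted _ (iota_ltn_sorted 1 j)).
by move=> a b /=; rewrite ltrN2 ltz_nat.
Qed.

Lemma mem_BT_root j x : (x \in BT_root j) = (- j%:Z <= x <= -1).
Proof.
apply/mapP/idP => [[k] | range_x]; first by rewrite mem_iota => k_j ->; lia.
by exists (absz (- x)); [rewrite mem_iota | ]; lia.
Qed.

Lemma maxneg_BT_root j : maxneg (BT_root j) = 0%N.
Proof.
by apply/eqP; rewrite -leqn0 maxneg_le; apply/allP => x; rewrite mem_BT_root; lia.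
Qed.

Lemma bt_vertex_root j : bt_vertex (BT_root j).
Proof.
have sorted_r := BT_root_sorted j.
have size_r : size (BT_root j) = j by rewrite size_map size_iota.
split; rewrite ?size_r ?maxneg_BT_root //.
- rewrite /avoids1234 has_incr4E full_wordE; apply/negP => /has_incr_cat[i [k [ik]]].
  move=> /(has_incr_sorted_gt sorted_r) le_i1.
  by rewrite -sorted_gt_mirror in sorted_r => /(has_incr_sorted_gt sorted_r); lia.
- by move=> x; rewrite mem_BT_root; lia.
- exact: (sorted_filter (rev_trans lt_trans) _ sorted_r).
by move=> j_gt0; exists (- j%:Z); rewrite ?mem_BT_root; lia.
Qed.

Lemma bt_label_root j : bt_label (BT_root j) = T_root j.
Proof.
have sorted_r := BT_root_sorted j.
have size_r : size (BT_root j) = j by rewrite size_map size_iota.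
by rewrite /bt_label !incr_prefix_sorted_gt // maxneg_BT_root subn0 size_r.
Qed.

Theorem proposition2p7 (j : nat) :
  tree_iso (T_root j) suc (BT_root j) BT_children.
Proof.
apply: (tree_iso_by_labels (lab := bt_label) (inv := bt_vertex)).
- exact: bt_label_root.
- exact: bt_vertex_root.
- by move=> s t bt_s /(mem_BT_children _ bt_s)[p [l [adm ->]]]; apply: bt_vertex_insert.
- exact: suc_bt_label.
- exact: bt_label_inj.
Qed.
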